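(* Let $d\ge3$ be odd, $k\in\mathbb{Z}^+$, $\phi_{(d,k)}(x)=x^d+kdx^{d-1}-kd$, and $a=-k(d-1)$. Then $\phi_{(d,k)}^n(a)>0$ for all $n\ge1$.
   Context: $\phi^n$ denotes the $n$-fold iterate. *)

From Stdlib Require Import ZArith.
Open Scope Z_scope.

Definition phi (d k : Z) (x : Z) : Z := x ^ d + k * d * x ^ (d - 1) - k * d.

Fixpoint iter_n (n : nat) (f : Z -> Z) (x : Z) : Z :=
  match n with
  | O => x
  | S m => f (iter_n m f x)
  end.

(* The point a = -k(d-1) is a critical point of phi, and since a + k d = k we get
   phi(a) = a^(d-1) (a + k d) - k d = k (a^(d-1) - d). As d - 1 is even,
   a^(d-1) = (k (d-1))^(d-1) >= (d-1)^2 > d, so phi(a) >= 1. Moreover phi(x) >= x for x >= 1,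
   so every later iterate stays >= 1. *)
From Stdlib Require Import ZArith Lia.
Open Scope Z_scope.

Lemma iter_n_ge (f : Z -> Z) (c x : Z) (n : nat) :
  (forall y, c <= y -> c <= f y) -> c <= f x -> (1 <= n)%nat -> c <= iter_n n f x.
Proof.
  intros Hf Hfx Hn.
  induction n as [|[|n] IH]; simpl in *.
  - lia.
  - exact Hfx.
  - apply Hf, IH; lia.
Qed.

Lemma phi_factor (d k x : Z) : 1 <= d -> phi d k x = (x + k * d) * x ^ (d - 1) - k * d.
Proof.
  intros Hd. unfold phi.
  replace (x ^ d) with (x * x ^ (d - 1)); [ring|].
  rewrite <- Z.pow_succ_r by lia. f_equal; lia.
Qed.

Lemma phi_ge_id (d k x : Z) : 1 <= d -> 0 <= k -> 1 <= x -> x <= phi d k x.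
Proof.
  intros Hd Hk Hx.
  assert (Hpow : 1 <= x ^ (d - 1)).
  { pose proof (Z.pow_le_mono_l 1 x (d - 1)) as Hmono.
    rewrite Z.pow_1_l in Hmono by lia. apply Hmono; lia. }
  rewrite phi_factor by lia. nia.
Qed.

Lemma phi_critical_value (d k : Z) : 1 <= d -> Z.Even (d - 1) ->
  phi d k (- k * (d - 1)) = k * ((k * (d - 1)) ^ (d - 1) - d).
Proof.
  intros Hd Heven.
  rewrite phi_factor by lia.
  replace (- k * (d - 1)) with (- (k * (d - 1))) by ring.
  rewrite Z.pow_opp_even by exact Heven.
  ring.
Qed.

Lemma phi_critical_value_pos (d k : Z) : 3 <= d -> Z.Even (d - 1) -> 0 < k ->
  0 < phi d k (- k * (d - 1)).
Proof.
  intros Hd Heven Hk.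
  assert (Hsq : (d - 1) ^ 2 <= (d - 1) ^ (d - 1)) by (apply Z.pow_le_mono_r; lia).
  assert (Hscale : (d - 1) ^ (d - 1) <= (k * (d - 1)) ^ (d - 1))
    by (apply Z.pow_le_mono_l; nia).
  rewrite (phi_critical_value d k ltac:(lia) Heven).
  rewrite Z.pow_2_r in Hsq.
  assert (Hsq_gt : d < (d - 1) * (d - 1)) by nia.
  apply Z.mul_pos_pos; lia.
Qed.

Theorem lemma3p3 (d k : Z) (hd : 3 <= d) (hodd : Z.odd d = true) (hk : 0 < k) (n : nat) (hn : (1 <= n)%nat) :
  0 < iter_n n (phi d k) (- k * (d - 1)).
Proof.
  assert (Heven : Z.Even (d - 1)).
  { destruct (proj1 (Z.odd_spec d) hodd) as [m Hm]. exists m. lia. }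
  enough (1 <= iter_n n (phi d k) (- k * (d - 1))) by lia.
  apply iter_n_ge; [| | exact hn].
  - intros y Hy. pose proof (phi_ge_id d k y). lia.
  - pose proof (phi_critical_value_pos d k hd Heven hk). lia.
Qed.
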